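(* Let $C\subseteq\mathbb{R}^{n+1}$ be a proper open cone with base-point $b\in C$, let $S,T\in\mathcal T(C)\setminus\{C\}$, $p\in S$, $q\in T$, and suppose $f_{S,p}|_C$ and $f_{T,q}|_C$ are Busemann points of the Funk geometry on $C$. If $(z_k)_k$ is a sequence in $C$ that is an almost-geodesic with respect to the Funk metric $\mathcal F_C$ and converges to $f_{S,p}|_C$ in the Funk sense, then \[\lim_{k\to\infty}\big(\mathcal F_C(b,z_k)+f_{T,q}(z_k)\big)=\inf_{(x_k)_k}\liminf_{k\to\infty}\big(\mathcal F_C(b,x_k)+f_{T,q}(x_k)\big),\] where the infimum is taken over all sequences $(x_k)_k$ in $C$ converging to $f_{S,p}|_C$ in the Funk sense on $C$.
   Context: An open cone is a nonempty open convex $C$ with $\lambda C\subseteq C$ for $\lambda>0$; proper means $\overline C\cap(-\overline C)=\{0\}$. For an open cone $K$, $y\in K$, $x\in\mathbb{R}^{n+1}$: $M(x/y;K)=\inf\{\lambda>0\colon\lambda y-x\in\overline K\}$ and $\mathcal F_K(x,y)=\log M(x/y;K)$ (Funk metric). For $z\in\partial C$, $\tau(C,z)=\{\lambda(w-z)\colon\lambda>0,w\in C\}$; $\Gamma(\Pi)=\{\tau(T,z)\colon T\in\Pi,z\in\partial T\}$; $\mathcal T(C)=\bigcup_{k=1}^n\Gamma^k(\{C\})$ (all contain $C$). For $T\in\mathcal T(C)\cup\{C\}$ and $p\in T$, $f_{T,p}(w)=\mathcal F_T(w,p)-\mathcal F_T(b,p)$. A sequence $(x_k)$ in $C$ converges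 to $f$ in the Funk sense on $C$ if $f_{C,x_k}\to f$ pointwise on $C$. $f$ is a Busemann point of the Funk geometry on $C$ if some Funk $\epsilon$-almost-geodesic $(x_k)$ in $C$ (i.e. $\sum_{i=0}^m\mathcal F_C(x_i,x_{i+1})\leq\mathcal F_C(x_0,x_{m+1})+\epsilon$ for all $m$, some $\epsilon>0$) converges to $f$ in the Funk sense and $f$ is not of the form $\mathcal F_C(\cdot,p)-\mathcal F_C(b,p)$, $p\in C$. A sequence $(z_k)$ is an almost-geodesic with respect to $\mathcal F_C$ if there are reals $0=t_0<t_1<\cdots\to\infty$ such that for every $\epsilon>0$ there is $N$ with $|\mathcal F_C(z_0,z_j)+\mathcal F_C(z_j,z_k)-t_k|<\epsilon$ for all $k\geq j\geq N$. *)

From HB Require Import structures.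
From mathcomp Require Import all_boot all_order all_algebra.
From mathcomp Require Import all_classical all_reals all_analysis.
Set Implicit Arguments. Unset Strict Implicit. Unset Printing Implicit Defensive.
Import Order.TTheory GRing.Theory Num.Theory.
Import numFieldNormedType.Exports.
Local Open Scope classical_set_scope.
Local Open Scope ring_scope.

Section Funk.
Variables (R : realType) (n : nat).
Notation V := 'rV[R]_(n.+1).

Definition open_cone (C : set V) : Prop :=
  (exists x, C x) /\ open C /\
  (forall x y (t : R), C x -> C y -> 0 <= t <= 1 -> C (t *: x + (1 - t) *: y)) /\
  (forall (l : R) x, 0 < l -> C x -> C (l *: x)).

Definition proper_cone (C : set V) : Prop :=
  forall x, closure C x -> closure C (- x) -> x = 0.

Definition Mfunk (K : set V) (x y : V) : R :=
  inf [set l : R | 0 < l /\ closure K (l *: y - x)].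

Definition funk (K : set V) (x y : V) : R := ln (Mfunk K x y).

Definition bdry (C : set V) : set V := closure C `\` interior C.

Definition tau (C : set V) (z : V) : set V :=
  [set v | exists (l : R) w, 0 < l /\ C w /\ v = l *: (w - z)].

Definition Gamma (Pi : set (set V)) : set (set V) :=
  [set U | exists T z, Pi T /\ bdry T z /\ U = tau T z].

Definition Tcal (C : set V) : set (set V) :=
  [set U | exists k : nat, (1 <= k <= n)%N /\ iter k Gamma [set C] U].

Definition fTp (T : set V) (b p : V) (w : V) : R :=
  funk T w p - funk T b p.

Definition funk_conv (C : set V) (b : V) (x : nat -> V) (f : V -> R) : Prop :=
  (forall k, C (x k)) /\
  (forall w, C w -> (fun k => fTp C b (x k) w) @ \oo --> f w).

Definition funk_eps_almost_geodesic (C : set V) (eps : R) (x : nat -> V) : Prop :=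
  (forall k, C (x k)) /\
  (forall m : nat, \sum_(0 <= i < m.+1) funk C (x i) (x i.+1)
                   <= funk C (x 0%N) (x m.+1) + eps).

Definition busemann (C : set V) (b : V) (f : V -> R) : Prop :=
  (exists (eps : R) (x : nat -> V), 0 < eps /\ funk_eps_almost_geodesic C eps x /\
      funk_conv C b x f) /\
  ~ (exists p, C p /\ forall w, C w -> f w = fTp C b p w).

Definition funk_almost_geodesic (C : set V) (z : nat -> V) : Prop :=
  exists t : nat -> R,
    t 0%N = 0 /\ (forall k, t k < t k.+1) /\ t @ \oo --> +oo /\
    forall eps : R, 0 < eps -> exists N : nat, forall j k : nat,
      (N <= j)%N -> (j <= k)%N ->
      `| funk C (z 0%N) (z j) + funk C (z j) (z k) - t k | < eps.

End Funk.

From HB Require Import structures.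
From mathcomp Require Import all_boot all_order all_algebra.
From mathcomp Require Import all_classical all_reals all_analysis.
From mathcomp Require Import lra.
Import Order.TTheory GRing.Theory Num.Theory.
Import numFieldNormedType.Exports.
Local Open Scope classical_set_scope.
Local Open Scope ring_scope.

(* The Funk limit [eta] of a sequence is 1-Lipschitz for [funk C], being a pointwise
   limit of the functions [funk C . y - funk C b y].  So for every sequence [x]
   converging to [f] in the Funk sense and every [w] in [C], the liminf of
   [funk C b (x k) + eta (x k)] is at least [eta w - f w].  Along an almost-geodesic
   [z] converging to [f], the limsup of [funk C b (z j) + f (z j)] is at most [0];
   taking [w = z j] bounds the limsup of [funk C b (z j) + eta (z j)] by the
   infimum, which in turn is at most the corresponding liminf along [z] itself. *)

Section FunkCone.
Set Implicit Arguments.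
Unset Strict Implicit.
Variables (R : realType) (n : nat).
Local Notation V := 'rV[R]_(n.+1).

Lemma closure_normP (A : set V) (x : V) :
  closure A x <-> forall e : R, 0 < e -> exists a, A a /\ `|x - a| < e.
Proof.
split.
- move=> Ax e e0; have [a [Aa]] := Ax (ball x e) (nbhsx_ballx _ _ e0).
  by rewrite -ball_normE; exists a.
- move=> H B /nbhs_ballP [e /= e0 eB].
  have [a [Aa xa]] := H e e0; exists a; split => //; apply: eB.
  by rewrite -ball_normE.
Qed.

Variable C : set V.
Hypothesis coneC : open_cone C.

Lemma open_cone_shift (u v : V) : C u -> exists2 s : R, 0 < s & C (u + s *: v).
Proof.
move=> Cu; case: coneC => _ [oC _].
have /nbhs_ballP [e /= e0 eB] : nbhs u C by apply: open_nbhs_nbhs.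
exists (e / (`|v| + 1)); first by rewrite divr_gt0 // ltr_wpDl.
apply: eB; rewrite -ball_normE /= opprD addrA subrr sub0r normrN normrZ.
rewrite ger0_norm; last by rewrite divr_ge0 // ?ltW // addr_ge0.
rewrite -mulrA mulrC -ltr_pdivlMr // divrr ?unitfE ?gt_eqF //.
by rewrite mulrC ltr_pdivrMr ?mul1r ?ltrDl // ltr_wpDl.
Qed.

Lemma open_coneZ (l : R) (x : V) : 0 < l -> C x -> C (l *: x).
Proof. by case: coneC => _ [_ [_ sc]]; apply: sc. Qed.

Lemma open_coneD (a c : V) : C a -> C c -> C (a + c).
Proof.
case: coneC => _ [_ [cv _]] Ca Cc.
have half01 : 0 <= (2:R)^-1 <= 1 by rewrite invr_ge0 ler0n invf_le1 // ler1n.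
have := open_coneZ (ltr0n _ 2) (cv a c _ Ca Cc half01).
congr C; rewrite scalerDr !scalerA mulrBr mulrV ?unitfE // mulr1.
have -> : (2 - 1 : R) = 1 by rewrite -natr1 addrK.
by rewrite !scale1r.
Qed.

Lemma closure_coneD (a c : V) : closure C a -> closure C c -> closure C (a + c).
Proof.
move=> /closure_normP ha /closure_normP hc; apply/closure_normP => e e0.
have e20 : 0 < e / 2 by rewrite divr_gt0.
have [a' [Ca' aa']] := ha _ e20; have [c' [Cc' cc']] := hc _ e20.
exists (a' + c'); split; first exact: open_coneD.
rewrite opprD addrACA (le_lt_trans (ler_normD _ _)) //.
by rewrite [e]splitr ltrD.
Qed.

Lemma closure_coneZ (t : R) (a : V) : 0 < t -> closure C a -> closure C (t *: a).
Proof.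
move=> t0 /closure_normP ha; apply/closure_normP => e e0.
have [a' [Ca' aa']] := ha _ (divr_gt0 e0 t0).
exists (t *: a'); split; first exact: open_coneZ.
by rewrite -scalerBr normrZ gtr0_norm // mulrC -ltr_pdivlMr.
Qed.

Lemma closure_cone_opp (x y : V) :
  (forall l : R, 0 < l -> closure C (l *: y - x)) -> closure C (- x).
Proof.
move=> H; apply/closure_normP => e e0.
have e20 : 0 < e / 2 by rewrite divr_gt0.
have y1 : 0 < `|y| + 1 by rewrite ltr_wpDl.
pose l := e / 2 / (`|y| + 1).
have l0 : 0 < l by rewrite divr_gt0.
have /closure_normP/(_ _ e20) [c [Cc hc]] := H _ l0.
exists c; split => //.
have -> : - x - c = - (l *: y) + (l *: y - x - c) by rewrite addrA addKr.
rewrite (le_lt_trans (ler_normD _ _)) // [X in _ < X]splitr ltrD //.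
by rewrite normrN normrZ gtr0_norm // mulrAC ltr_pdivrMr // ltr_pM2l // ltrDl.
Qed.

Hypothesis properC : proper_cone C.

Lemma proper_open_cone_not0 : ~ C 0.
Proof.
move=> C0; pose v : V := const_mx 1.
have [s1 s10] := open_cone_shift v C0; rewrite add0r => Cv.
have [s2 s20] := open_cone_shift (- v) C0; rewrite add0r => Cnv.
have Cv' : C (s2 *: v).
  have := open_coneZ (divr_gt0 s20 s10) Cv.
  by rewrite scalerA mulrVK // unitfE gt_eqF.
have := properC (subset_closure Cv'); rewrite -scalerN => /(_ (subset_closure Cnv)).
move=> /(congr1 (fun M : V => M 0 0)); rewrite !mxE mulr1 => /eqP.
by rewrite gt_eqF.
Qed.

Definition Mfunk_set (x y : V) := [set l : R | 0 < l /\ closure C (l *: y - x)].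

Lemma MfunkE x y : Mfunk C x y = inf (Mfunk_set x y).
Proof. by []. Qed.

Lemma Mfunk_set_neq0 x y : C y -> exists l, Mfunk_set x y l.
Proof.
move=> Cy; have [s s0 Cs] := open_cone_shift (- x) Cy.
have si : 0 < s^-1 by rewrite invr_gt0.
exists s^-1; split => //; apply: subset_closure.
have := open_coneZ si Cs.
by rewrite scalerDr scalerA mulVf ?gt_eqF // scale1r.
Qed.

Lemma Mfunk_set_lbound x y : has_lbound (Mfunk_set x y).
Proof. by exists 0 => l [l0 _]; exact: ltW. Qed.

Lemma Mfunk_set_le x y l l' : C y -> Mfunk_set x y l -> l <= l' -> Mfunk_set x y l'.
Proof.
move=> Cy [l0 hl]; rewrite le_eqVlt => /orP [/eqP <- //|ll'].
split; first exact: lt_trans ll'.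
have -> : l' *: y - x = (l' - l) *: y + (l *: y - x).
  by rewrite scalerBl addrA subrK.
apply: closure_coneD hl; apply/subset_closure/open_coneZ => //.
by rewrite subr_gt0.
Qed.

Lemma Mfunk_ge0 x y : C y -> 0 <= Mfunk C x y.
Proof.
move=> Cy; apply: lb_le_inf; first exact: Mfunk_set_neq0.
by move=> l [l0 _]; exact: ltW.
Qed.

(* Properness is what prevents [Mfunk C x y] from vanishing: otherwise [-x]
   would lie in the closure of [C] along with [x]. *)
Lemma Mfunk_gt0 x y : C x -> C y -> 0 < Mfunk C x y.
Proof.
move=> Cx Cy; rewrite lt_def Mfunk_ge0 // andbT; apply/negP => /eqP M0.
have Hl (l : R) : 0 < l -> closure C (l *: y - x).
  move=> l0; have : inf (Mfunk_set x y) < l by rewrite -MfunkE M0.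
  move=> /(inf_lt (Mfunk_set_neq0 x Cy)) [l1 Al1 l1l].
  by have [] := Mfunk_set_le Cy Al1 (ltW l1l).
apply: proper_open_cone_not0.
by rewrite -(properC (subset_closure Cx) (closure_cone_opp Hl)).
Qed.

Lemma Mfunk_submul x y z : C x -> C y -> C z ->
  Mfunk C x z <= Mfunk C x y * Mfunk C y z.
Proof.
move=> Cx Cy Cz.
have Mset_mul l m : Mfunk_set x y l -> Mfunk_set y z m -> Mfunk C x z <= l * m.
  move=> [l0 hl] [m0 hm]; apply: ge_inf; first exact: Mfunk_set_lbound.
  split; first exact: mulr_gt0.
  have <- : l *: (m *: z - y) + (l *: y - x) = (l * m) *: z - x.
    by rewrite scalerBr scalerA addrA subrK.
  exact: closure_coneD (closure_coneZ l0 hm) hl.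
have Mxy0 := Mfunk_gt0 Cx Cy.
have Mxz_le m : Mfunk_set y z m -> Mfunk C x z / Mfunk C x y <= m.
  move=> Am; have m0 : 0 < m by case: Am.
  rewrite ler_pdivrMr // mulrC -ler_pdivrMr //; apply: lb_le_inf.
    exact: Mfunk_set_neq0.
  by move=> l Al; rewrite ler_pdivrMr // Mset_mul.
have := lb_le_inf (Mfunk_set_neq0 y Cz) Mxz_le.
rewrite -MfunkE (ler_pdivrMr _ _ Mxy0) => Mxz.
by rewrite mulrC.
Qed.

Lemma funk_triangle x y z : C x -> C y -> C z ->
  funk C x z <= funk C x y + funk C y z.
Proof.
move=> Cx Cy Cz; rewrite /funk -lnM ?posrE ?Mfunk_gt0 //.
by rewrite ler_ln ?posrE ?mulr_gt0 ?Mfunk_gt0 // Mfunk_submul.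
Qed.

Lemma funk_xx_le0 x : C x -> funk C x x <= 0.
Proof.
move=> Cx; apply: ln_le0; apply/ler_addgt0Pr => e e0; apply: ge_inf.
  exact: Mfunk_set_lbound.
split; first by rewrite addr_gt0.
rewrite scalerDl scale1r addrAC subrr add0r.
exact/subset_closure/open_coneZ.
Qed.

End FunkCone.

Section FunkLimits.
Set Implicit Arguments.
Unset Strict Implicit.
Variables (R : realType) (n : nat).
Local Notation V := 'rV[R]_(n.+1).
Variables (C : set V) (b : V).
Hypotheses (coneC : open_cone C) (properC : proper_cone C).

Lemma funk_conv_lipschitz (y : nat -> V) (g : V -> R) :
  funk_conv C b y g -> forall u v, C u -> C v -> g u - g v <= funk C u v.
Proof.
move=> [Cy yg] u v Cu Cv.
have yguv : (fun m => fTp C b (y m) u - fTp C b (y m) v) @ \oo --> g u - g v.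
  exact: cvgB (yg u Cu) (yg v Cv).
rewrite -(cvg_lim _ yguv) //; apply: limr_le; first exact: cvgP yguv.
apply: nearW => m /=; rewrite /fTp opprB addrA subrK lerBlDr.
exact: funk_triangle.
Qed.

Lemma almost_geodesic_funk_conv_le (z : nat -> V) (f : V -> R) (e : R) :
  (forall k, C (z k)) -> funk_almost_geodesic C z -> funk_conv C b z f -> 0 < e ->
  \forall j \near \oo, funk C b (z j) + f (z j) <= e.
Proof.
move=> Cz [t [_ [_ [_ zt]]]] [_ zf] e0.
have e30 : 0 < e / 3 by rewrite divr_gt0.
have [N1 zN1] := zt _ e30.
have : \forall j \near \oo, f (z 0%N) - e / 3 <= fTp C b (z j) (z 0%N).
  by apply: cvgr_ge; [exact: zf | rewrite ltrBlDr ltrDl].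
move=> [N2 _ zN2]; exists (maxn N1 N2) => // j; rewrite /= geq_max => /andP [j1 j2].
have f_drop : f (z j) - f (z 0%N) <= - funk C (z 0%N) (z j) + (e / 3 + e / 3).
  have zfj0 : (fun k => fTp C b (z k) (z j) - fTp C b (z k) (z 0%N)) @ \oo
      --> f (z j) - f (z 0%N).
    exact: cvgB (zf _ (Cz j)) (zf _ (Cz 0%N)).
  rewrite -(cvg_lim _ zfj0) //; apply: limr_le; first exact: cvgP zfj0.
  exists j => // k /= jk; rewrite /fTp.
  have := zN1 j k j1 jk; have := zN1 k k (leq_trans j1 jk) (leqnn k).
  have := funk_xx_le0 coneC (Cz k).
  (* [lra] must see the Funk distances as atoms: unifying them unfolds [ln] and [inf]. *)
  move: (funk C (z k) (z k)) (funk C (z j) (z k)) (funk C (z 0%N) (z j)).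
  move: (funk C (z 0%N) (z k)) (funk C b (z k)) => d_kk d_jk d_0j d_0k d_bk.
  by move=> ? /ltr_normlP [? ?] /ltr_normlP [? ?]; lra.
have := zN2 j j2; move: f_drop; rewrite /fTp.
by move: (funk C (z 0%N) (z j)) (funk C b (z j)) => d_0j d_bj; lra.
Qed.

Lemma funk_conv_limn_einf_ge (eta f : V -> R) (x : nat -> V) (w : V) (e : R) :
  (forall u v, C u -> C v -> eta u - eta v <= funk C u v) ->
  funk_conv C b x f -> C w -> 0 < e ->
  ((eta w - f w - e)%:E <= limn_einf (fun k => (funk C b (x k) + eta (x k))%:E))%E.
Proof.
move=> eta_lip [Cx xf] Cw e0.
have : \forall k \near \oo, fTp C b (x k) w <= f w + e.
  by apply: cvgr_le; [exact: xf | rewrite ltrDl].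
move=> [N _ xN]; rewrite limn_einf_lim; apply: lime_ge; first exact: is_cvg_einfs.
exists N => // m /= Nm; apply: le_ereal_inf_tmp => _ [k /= mk <-].
have := xN k (leq_trans Nm mk); have := eta_lip _ _ Cw (Cx k).
rewrite lee_fin /fTp.
move: (funk C w (x k)) (funk C b (x k)) => d_wx d_bx; lra.
Qed.

End FunkLimits.

Lemma cvg_limn_esup_le_einf (R : realType) (u : (\bar R)^nat) (l : \bar R) :
  (limn_esup u <= l -> l <= limn_einf u -> u @ \oo --> l)%E.
Proof.
move=> supl linf; have infsup := limn_einf_sup u.
have infl : limn_einf u = l by apply/eqP; rewrite eq_le linf andbT (le_trans infsup).
have supl' : limn_esup u = l by apply/eqP; rewrite eq_le supl /= (le_trans linf).
apply: (@squeeze_cvge _ _ _ _ (einfs u) u (esups u)).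
- apply: nearW => k; apply/andP; split.
    by apply: ereal_inf_lbound; exists k => /=.
  by apply: ereal_sup_ubound; exists k => /=.
- by rewrite -infl limn_einf_lim; exact: is_cvg_einfs.
- by rewrite -supl' limn_esup_lim; exact: is_cvg_esups.
Qed.

Theorem lemma4p7p2 (R : realType) (n : nat) (C : set 'rV[R]_(n.+1))
  (b : 'rV[R]_(n.+1)) (S T : set 'rV[R]_(n.+1)) (p q : 'rV[R]_(n.+1))
  (z : nat -> 'rV[R]_(n.+1)) :
  open_cone C -> proper_cone C -> C b ->
  Tcal C S -> S <> C -> Tcal C T -> T <> C -> S p -> T q ->
  busemann C b (fTp S b p) -> busemann C b (fTp T b q) ->
  (forall k, C (z k)) -> funk_almost_geodesic C z ->
  funk_conv C b z (fTp S b p) ->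
  (fun k => ((funk C b (z k) + fTp T b q (z k))%:E)) @ \oo -->
    ereal_inf [set limn_einf (fun k => ((funk C b (x k) + fTp T b q (x k))%:E))
              | x in [set x : nat -> 'rV[R]_(n.+1) | funk_conv C b x (fTp S b p)]].
Proof.
move=> coneC properC _ _ _ _ _ _ _ _ [[_ [y [_ [_ yT]]]] _] Cz zgeo zS.
have eta_lip := funk_conv_lipschitz coneC properC yT.
apply: cvg_limn_esup_le_einf; last by apply: ereal_inf_lbound; exists z.
apply/lee_addgt0Pr => e e0; have e20 : 0 < e / 2 by rewrite divr_gt0.
rewrite limn_esup_lim; apply: lime_le; first exact: is_cvg_esups.
have [N _ zN] := almost_geodesic_funk_conv_le coneC Cz zgeo zS e20.
exists N => // m /= Nm; apply: ge_ereal_sup => _ [k /= mk <-].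
rewrite -leeBlDr // -EFinB; apply: le_ereal_inf_tmp => _ [x xS <-].
apply: le_trans (funk_conv_limn_einf_ge eta_lip xS (Cz k) e20).
have := zN k (leq_trans Nm mk); rewrite lee_fin.
by move: (funk C b (z k)) (fTp T b q (z k)) (fTp S b p (z k)) => ???; lra.
Qed.
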